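(* Let $X$ be a Banach lattice of (equivalence classes of) real valued functions on a $\sigma$-finite measure space $(\Omega,\Sigma,\mu)$, with $X\subseteq L_1+L_\infty$, and let $T:X\to X$ be a linear operator which is semi band preserving. Let $\Sigma_T=\{A\subseteq\Omega:\ \exists f\in X \text{ with } \operatorname{supp}(Tf)=A\}$ and $S_T=\bigcup_{A\in\Sigma_T}A$. Then for every $f\in X$ with $\operatorname{supp} f\subseteq\Omega\setminus S_T$ we have $Tf=0$.
   Context: For $f,g\in X$, $f\perp g$ means $|f|\wedge|g|=0$ (i.e. the supports are disjoint). A linear operator $T$ on $X$ is semi band preserving if for all $f,g\in X$: $f\perp Tg$ implies $Tf\perp Tg$. $\operatorname{supp} f$ is the minimal set outside of which $f=0$ a.e.; all set relations are modulo null sets. *)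

From HB Require Import structures.
From mathcomp Require Import all_boot all_order all_algebra.
From mathcomp Require Import all_classical all_reals all_analysis.
Set Implicit Arguments. Unset Strict Implicit. Unset Printing Implicit Defensive.
Import Order.TTheory GRing.Theory Num.Theory.
Import numFieldNormedType.Exports.
Local Open Scope classical_set_scope.
Local Open Scope ring_scope.

Section BanachFunctionLattice.
Context {d : measure_display} {Om : measurableType d} {R : realType}.
Variable mu : {measure set Om -> \bar R}.

Definition aeeq (f g : Om -> R) : Prop := {ae mu, forall x, f x = g x}.

Definition disj (f g : Om -> R) : Prop :=
  {ae mu, forall x, Num.min `|f x| `|g x| = 0}.

(* support of (a representative of) f; only meaningful modulo null sets *)
Definition supp (f : Om -> R) : set Om := [set x | f x != 0].

Definition ae_subset (A B : set Om) : Prop := mu.-negligible (A `\` B).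
Definition ae_seteq (A B : set Om) : Prop := ae_subset A B /\ ae_subset B A.

(* X is a Banach lattice of (classes of) real functions on (Om, mu),
   represented by the set of all its representatives, with lattice norm nrm *)
Record banach_function_lattice (X : set (Om -> R)) (nrm : (Om -> R) -> R) : Prop := {
  bfl_meas : forall f, X f -> measurable_fun setT f;
  bfl_aeeq : forall f g, X f -> measurable_fun setT g -> aeeq f g -> X g;
  bfl_zero : X (fun _ => 0);
  bfl_add : forall f g, X f -> X g -> X (f \+ g);
  bfl_scale : forall (k : R) f, X f -> X (fun x => k * f x);
  bfl_abs : forall f, X f -> X (fun x => `|f x|);
  bfl_nrm_ge0 : forall f, X f -> 0 <= nrm f;
  bfl_nrm_eq0 : forall f, X f -> (nrm f = 0 <-> aeeq f (fun _ => 0));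
  bfl_nrm_tri : forall f g, X f -> X g -> nrm (f \+ g) <= nrm f + nrm g;
  bfl_nrm_scale : forall (k : R) f, X f -> nrm (fun x => k * f x) = `|k| * nrm f;
  bfl_nrm_lattice : forall f g, X f -> X g ->
      {ae mu, forall x, `|f x| <= `|g x|} -> nrm f <= nrm g;
  bfl_complete : forall u : nat -> (Om -> R), (forall n, X (u n)) ->
      (forall e : R, 0 < e -> exists N : nat, forall m n : nat,
          (N <= m)%N -> (N <= n)%N -> nrm (fun x => u m x - u n x) < e) ->
      exists2 f, X f & (fun n => nrm (fun x => u n x - f x)) @ \oo --> 0
}.

Definition in_L1_plus_Linf (X : set (Om -> R)) : Prop :=
  forall f, X f -> exists g h : Om -> R,
    [/\ mu.-integrable setT (fun x => (g x)%:E),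
        measurable_fun setT h,
        (exists M : R, {ae mu, forall x, `|h x| <= M}) &
        aeeq f (g \+ h)].

Definition linear_op_on (X : set (Om -> R)) (T : (Om -> R) -> (Om -> R)) : Prop :=
  [/\ forall f, X f -> X (T f),
      forall f g, X f -> X g -> aeeq f g -> aeeq (T f) (T g),
      forall f g, X f -> X g -> aeeq (T (f \+ g)) (T f \+ T g) &
      forall (k : R) f, X f -> aeeq (T (fun x => k * f x)) (fun x => k * T f x)].

Definition semi_band_preserving (X : set (Om -> R)) (T : (Om -> R) -> (Om -> R)) : Prop :=
  forall f g, X f -> X g -> disj f (T g) -> disj (T f) (T g).

Definition SigmaT (X : set (Om -> R)) (T : (Om -> R) -> (Om -> R)) : set (set Om) :=
  [set A | exists2 f, X f & ae_seteq (supp (T f)) A].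

(* S is (a representative of) the union of the family F, modulo null sets,
   i.e. its essential union: the least measurable set (mod null sets)
   containing every member of F (mod null sets). *)
Definition is_ess_union (F : set (set Om)) (S : set Om) : Prop :=
  [/\ measurable S,
      forall A, F A -> ae_subset A S &
      forall S', measurable S' -> (forall A, F A -> ae_subset A S') -> ae_subset S S'].

End BanachFunctionLattice.

From HB Require Import structures.
From mathcomp Require Import all_boot all_order all_algebra.
From mathcomp Require Import all_classical all_reals all_analysis.
Import Order.TTheory GRing.Theory Num.Theory.
Local Open Scope classical_set_scope.
Local Open Scope ring_scope.

(* Tf belongs to Sigma_T, so supp Tf lies in S_T while supp f lies outside it:
   hence f is disjoint from Tf. Semi band preservation then makes Tf disjoint
   from itself, i.e. Tf = 0. *)

Section SemiBandPreserving.
Context {d : measure_display} {Om : measurableType d} {R : realType}.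
Variable mu : {measure set Om -> \bar R}.

Lemma ae_subset_refl (A : set Om) : ae_subset mu A A.
Proof. by rewrite /ae_subset setDv; exact: negligible_set0. Qed.

Lemma SigmaT_supp (X : set (Om -> R)) (T : (Om -> R) -> Om -> R) f :
  X f -> SigmaT mu X T (supp (T f)).
Proof. by move=> Xf; exists f => //; split; exact: ae_subset_refl. Qed.

Lemma min_norm_eq0 (a b : R) : a = 0 \/ b = 0 -> Num.min `|a| `|b| = 0.
Proof. by case=> ->; rewrite normr0; [rewrite min_l | rewrite min_r]. Qed.

Lemma disj_supp_separated (S : set Om) (f g : Om -> R) :
  ae_subset mu (supp f) (~` S) -> ae_subset mu (supp g) S -> disj mu f g.
Proof.
move=> fS gS; apply: negligibleS (negligibleU fS gS) => x /= fg_ne0.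
have [fx0|fx0] := eqVneq (f x) 0.
  by exfalso; apply/fg_ne0/min_norm_eq0; left.
have [gx0|gx0] := eqVneq (g x) 0.
  by exfalso; apply/fg_ne0/min_norm_eq0; right.
by have [xS|xS] := pselect (S x); [left; split => // /(_ xS) | right].
Qed.

Lemma disj_self_ae0 (g : Om -> R) : disj mu g g -> aeeq mu g (fun=> 0).
Proof.
apply: filterS => x; rewrite minxx => /eqP.
by rewrite normr_eq0 => /eqP.
Qed.

End SemiBandPreserving.

Theorem proposition4p2 (d : measure_display) (Om : measurableType d) (R : realType)
  (mu : {measure set Om -> \bar R}) (X : set (Om -> R)) (nrm : (Om -> R) -> R)
  (T : (Om -> R) -> (Om -> R)) :
  sigma_finite setT mu ->
  banach_function_lattice mu X nrm ->
  in_L1_plus_Linf mu X ->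
  linear_op_on mu X T ->
  semi_band_preserving mu X T ->
  forall ST : set Om, is_ess_union mu (SigmaT mu X T) ST ->
  forall f, X f -> ae_subset mu (supp f) (~` ST) ->
  aeeq mu (T f) (fun _ => 0).
Proof.
move=> _ _ _ _ sbp ST [_ SigmaT_sub_ST _] f Xf f_out_ST.
have Tf_in_ST : ae_subset mu (supp (T f)) ST by apply/SigmaT_sub_ST/SigmaT_supp.
apply/disj_self_ae0/sbp => //.
exact: disj_supp_separated f_out_ST Tf_in_ST.
Qed.
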